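(* Let $0<m<1$, $\mu>0$, $f$ smooth, $u_->u_+=0$, $s=\frac{f(u_+)-f(u_-)}{u_+-u_-}$ with $f'(u_+)<s<f'(u_-)$, and let $U$ be a monotonically decreasing viscous shock profile, i.e. $-sU'+f(U)'=\mu(U^m)''$ with $U(-\infty)=u_-$, $U(+\infty)=u_+$. Then there is a constant $C>0$ such that for all $\xi\in\mathbb{R}$, $$|U_\xi(\xi)|\le CU(\xi)^{2-m},\qquad |U_{\xi\xi}(\xi)|\le CU(\xi)^{3-2m}.$$ *)

From Stdlib Require Import Reals.
From Coquelicot Require Import Coquelicot.
Open Scope R_scope.

Definition smooth (f : R -> R) : Prop := forall (k : nat) (x : R), ex_derive_n f k x.

(* Integrating the profile equation once gives mu (U^m)' = f(U) - s U - K.  Since U^m is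
   positive and decreasing, (U^m)' can only converge to 0 at +oo, which forces K = f(0).  Hence U
   solves the autonomous equation U' = U^(1-m) h(U) with h(v) = (f(v) - f(0) - s v) / (mu m).
   As h(0) = 0 and h is C^1, |h(v)| <= B v and |h'(v)| <= B on (0, u_-], so |U'| <= B U^(2-m);
   differentiating the autonomous equation, U'' = G'(U) U' with G(v) = v^(1-m) h(v) and
   |G'(v)| <= (2-m) B v^(1-m), which gives the second bound. *)

From Stdlib Require Import Reals Lra.
From Coquelicot Require Import Coquelicot.
Open Scope R_scope.

Lemma decreasing_gt_lim_p_infty (U : R -> R) (l : R) :
  (forall x y, x < y -> U y < U x) -> is_lim U p_infty l -> forall x, l < U x.
Proof.
  intros Hdec Hlim x.
  assert (Hle : Rbar_le l (U (x + 1))).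
  { apply (is_lim_le_loc U (fun _ => U (x + 1)) p_infty); [| exact Hlim | apply is_lim_const].
    exists (x + 1); intros y Hy; left; apply Hdec; exact Hy. }
  simpl in Hle. specialize (Hdec x (x + 1)). lra.
Qed.

Lemma decreasing_lt_lim_m_infty (U : R -> R) (l : R) :
  (forall x y, x < y -> U y < U x) -> is_lim U m_infty l -> forall x, U x < l.
Proof.
  intros Hdec Hlim x.
  assert (Hle : Rbar_le (U (x - 1)) l).
  { apply (is_lim_le_loc (fun _ => U (x - 1)) U m_infty); [| apply is_lim_const | exact Hlim].
    exists (x - 1); intros y Hy; left; apply Hdec; exact Hy. }
  simpl in Hle. specialize (Hdec (x - 1) x). lra.
Qed.

Lemma continuous_bounded_on_segment (g : R -> R) (a b : R) :
  (forall x, continuous g x) -> exists L, 0 < L /\ forall c, a <= c <= b -> Rabs (g c) <= L.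
Proof.
  intros Hg.
  destruct (continuity_ab_maj (fun c => Rabs (g c)) a (Rmax a b) (Rmax_l a b)) as [x [Hx _]].
  { intros c _. apply continuity_pt_filterlim, continuous_Rabs_comp, Hg. }
  exists (Rabs (g x) + 1). split.
  - generalize (Rabs_pos (g x)). lra.
  - intros c Hc. assert (Rabs (g c) <= Rabs (g x)) by (apply Hx; generalize (Rmax_r a b); lra). lra.
Qed.

Lemma C1_vanishing_at_0_bounds (h : R -> R) (b : R) :
  (forall x, ex_derive h x) -> (forall x, continuous (Derive h) x) -> h 0 = 0 ->
  exists B, 0 < B /\ forall v, 0 < v <= b -> Rabs (h v) <= B * v /\ Rabs (Derive h v) <= B.
Proof.
  intros Hh Hh' Hh0.
  destruct (continuous_bounded_on_segment (Derive h) (- b) b Hh') as [B [HB HDh]].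
  exists B. split; [exact HB|]. intros v Hv. split.
  - replace (h v) with (h v - h 0) by (rewrite Hh0; ring).
    replace v with (Rabs (v - 0)) at 2 by (rewrite Rminus_0_r; apply Rabs_right; lra).
    apply (bounded_variation h (Derive h)). intros t Ht. split.
    + apply Derive_correct, Hh.
    + apply HDh. rewrite !Rminus_0_r, (Rabs_right v) in Ht by lra. apply Rabs_le_between in Ht. lra.
  - apply HDh. lra.
Qed.

Definition chord_gap (f : R -> R) (s c v : R) : R := (f v - f 0 - s * v) / c.

Lemma ex_derive_chord_gap (f : R -> R) (s c v : R) :
  smooth f -> ex_derive (chord_gap f s c) v.
Proof. intros Hf. unfold chord_gap. auto_derive. exact (Hf 1%nat v). Qed.

Lemma chord_gap_bounds (f : R -> R) (s c b : R) :
  smooth f -> c <> 0 ->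
  exists B, 0 < B /\ forall v, 0 < v <= b ->
    Rabs (chord_gap f s c v) <= B * v /\ Rabs (Derive (chord_gap f s c) v) <= B.
Proof.
  intros Hf Hc.
  apply C1_vanishing_at_0_bounds.
  - intros v. now apply ex_derive_chord_gap.
  - intros v. apply (continuous_ext (fun w => (Derive f w - s) / c)).
    + intros w. symmetry. apply is_derive_unique. unfold chord_gap.
      auto_derive; [exact (Hf 1%nat w) | change (fun x : R => f x) with f; field; exact Hc].
    + apply (@ex_derive_continuous R_AbsRing R_NormedModule). auto_derive. exact (Hf 2%nat v).
  - unfold chord_gap, Rdiv. ring.
Qed.

Lemma Rpower_gt_0 (x y : R) : 0 < Rpower x y.
Proof. apply exp_pos. Qed.

Lemma is_derive_Rpower_comp (U : R -> R) (a x : R) : 0 < U x -> ex_derive U x ->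
  is_derive (fun y => Rpower (U y) a) x (a * Rpower (U x) (a - 1) * Derive U x).
Proof.
  intros HU HdU.
  replace (a * Rpower (U x) (a - 1) * Derive U x) with (scal (Derive U x) (a * Rpower (U x) (a - 1)))
    by (rewrite Rmult_comm; reflexivity).
  apply (is_derive_comp (fun v => Rpower v a)); [| now apply Derive_correct].
  now apply is_derive_Reals, derivable_pt_lim_power.
Qed.

Lemma is_lim_Derive_p_infty_nonincreasing (V : R -> R) (B d : R) :
  (forall x, ex_derive V x) -> (forall x, B <= V x) -> (forall x y, x < y -> V y <= V x) ->
  is_lim (Derive V) p_infty d -> d = 0.
Proof.
  intros HV HB Hdec Hlim.
  destruct (Req_dec d 0) as [|Hd]; [assumption | exfalso].
  assert (Hd' : 0 < Rabs d) by now apply Rabs_pos_lt.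
  apply is_lim_spec in Hlim.
  destruct (Hlim (mkposreal (Rabs d / 2) ltac:(lra))) as [M HM]; simpl in HM.
  (* On [a, a + t] a slope below d / 2 < 0 would push V below B - 1. *)
  set (a := M + 1). set (t := 2 * (V a - B + 1) / Rabs d).
  assert (Ht : 0 < t) by (unfold t; generalize (HB a); intros; apply Rdiv_lt_0_compat; lra).
  destruct (MVT_cor2 V (Derive V) a (a + t)) as [z [Hz Hza]]; [lra | |].
  { intros c _. now apply is_derive_Reals, Derive_correct. }
  assert (Hdz := HM z ltac:(unfold a in *; lra)).
  replace (a + t - a) with t in Hz by ring.
  assert (V (a + t) <= V a) by (apply Hdec; lra).
  generalize (HB (a + t)); intros.
  assert (Et : Rabs d * t = 2 * (V a - B + 1)) by (unfold t; field; lra).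
  apply Rabs_def2 in Hdz.
  destruct (Rtotal_order d 0) as [Hneg | [Hzero | Hpos]]; [| contradiction |].
  - rewrite Rabs_left in Hdz, Et by lra. nra.
  - rewrite Rabs_right in Hdz by lra. nra.
Qed.

Lemma profile_first_integral (m mu s : R) (f U : R -> R) :
  (forall x, ex_derive f x) -> (forall x, 0 < U x) -> (forall x, ex_derive U x) ->
  (forall x, ex_derive (Derive U) x) ->
  (forall x, - s * Derive U x + Derive (fun y => f (U y)) x
             = mu * Derive_n (fun y => Rpower (U y) m) 2 x) ->
  exists K, forall x, mu * Derive (fun y => Rpower (U y) m) x = f (U x) - s * U x - K.
Proof.
  intros Hf HU HU1 HU2 Hode.
  set (V := fun y => Rpower (U y) m) in *.
  assert (HDV : forall x, Derive V x = m * Rpower (U x) (m - 1) * Derive U x)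
    by (intros x; apply is_derive_unique, is_derive_Rpower_comp; auto).
  assert (HV2 : forall x, ex_derive (Derive V) x).
  { intros x. apply (ex_derive_ext (fun t => m * Rpower (U t) (m - 1) * Derive U t)).
    - intros t. now rewrite HDV.
    - apply ex_derive_mult; [apply ex_derive_scal; eexists; now apply is_derive_Rpower_comp | apply HU2]. }
  set (phi := fun t => f (U t) - s * U t - mu * Derive V t).
  assert (Hphi : forall t, is_derive phi t 0).
  { intros t.
    replace 0 with (Derive (fun y => f (U y)) t - s * Derive U t - mu * Derive (Derive V) t)
      by (change (Derive (Derive V) t) with (Derive_n V 2 t); rewrite <- Hode; ring).
    apply (@is_derive_minus R_AbsRing R_NormedModule); [apply (@is_derive_minus R_AbsRing R_NormedModule)|].
    - apply Derive_correct, ex_derive_comp; auto.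
    - apply is_derive_scal, Derive_correct; auto.
    - apply is_derive_scal, Derive_correct; auto. }
  exists (phi 0). intros x.
  assert (Hconst : Rabs (phi x - phi 0) <= 0 * Rabs (x - 0)).
  { apply (bounded_variation phi (fun _ => 0)). intros t _. rewrite Rabs_R0. split; [apply Hphi | lra]. }
  rewrite Rmult_0_l in Hconst. generalize (Rabs_pos (phi x - phi 0)); intros.
  assert (phi x - phi 0 = 0) by (apply Rabs_eq_0; lra).
  unfold phi in *. lra.
Qed.

Lemma profile_first_integral_constant (m mu s K : R) (f U : R -> R) :
  0 < m -> 0 < mu -> (forall x, ex_derive f x) -> (forall x, 0 < U x) ->
  (forall x, ex_derive U x) -> (forall x y, x < y -> U y < U x) -> is_lim U p_infty 0 ->
  (forall x, mu * Derive (fun y => Rpower (U y) m) x = f (U x) - s * U x - K) ->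
  K = f 0.
Proof.
  intros Hm Hmu Hf HU HU1 Hdec Hlim HK.
  set (g := fun v => (f v - s * v - K) / mu).
  assert (Hg0 : g 0 = 0).
  { apply (is_lim_Derive_p_infty_nonincreasing (fun y => Rpower (U y) m) 0).
    - intros x. eexists. now apply is_derive_Rpower_comp.
    - intros x. left. apply Rpower_gt_0.
    - intros x y Hxy. apply Rle_Rpower_l; [lra |]. split; [apply HU | left; now apply Hdec].
    - apply (is_lim_ext (fun x => g (U x))).
      + intros x. unfold g. rewrite <- HK. field. lra.
      + apply is_lim_comp_continuous; [exact Hlim |].
        apply (@ex_derive_continuous R_AbsRing R_NormedModule). unfold g. auto_derive; auto. }
  assert (E : f 0 - s * 0 - K = mu * g 0) by (unfold g; field; lra).
  rewrite Hg0 in E. lra.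
Qed.

Lemma profile_autonomous_ode (m mu s : R) (f U : R -> R) :
  0 < m -> 0 < mu -> (forall x, ex_derive f x) -> (forall x, 0 < U x) ->
  (forall x, ex_derive U x) -> (forall x, ex_derive (Derive U) x) ->
  (forall x y, x < y -> U y < U x) -> is_lim U p_infty 0 ->
  (forall x, - s * Derive U x + Derive (fun y => f (U y)) x
             = mu * Derive_n (fun y => Rpower (U y) m) 2 x) ->
  forall x, Derive U x = Rpower (U x) (1 - m) * chord_gap f s (mu * m) (U x).
Proof.
  intros Hm Hmu Hf HU HU1 HU2 Hdec Hlim Hode. unfold chord_gap.
  destruct (profile_first_integral m mu s f U Hf HU HU1 HU2 Hode) as [K HK].
  rewrite <- (profile_first_integral_constant m mu s K f U Hm Hmu Hf HU HU1 Hdec Hlim HK).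
  intros x. specialize (HK x).
  replace (Derive (fun y => Rpower (U y) m) x) with (m * Rpower (U x) (m - 1) * Derive U x) in HK
    by (symmetry; apply is_derive_unique, is_derive_Rpower_comp; auto).
  assert (Hinv : Rpower (U x) (1 - m) * Rpower (U x) (m - 1) = 1).
  { rewrite <- Rpower_plus. replace (1 - m + (m - 1)) with 0 by ring. apply Rpower_O, HU. }
  replace (f (U x) - K - s * U x) with (mu * (m * Rpower (U x) (m - 1) * Derive U x))
    by (rewrite HK; ring).
  transitivity (Rpower (U x) (1 - m) * Rpower (U x) (m - 1) * Derive U x).
  - rewrite Hinv. ring.
  - field. lra.
Qed.

Lemma Derive_n2_autonomous (U G : R -> R) (x : R) :
  (forall y, Derive U y = G (U y)) -> ex_derive U x -> ex_derive G (U x) ->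
  Derive_n U 2 x = Derive G (U x) * Derive U x.
Proof.
  intros HUG HU HG.
  change (Derive_n U 2 x) with (Derive (Derive U) x).
  rewrite (Derive_ext _ _ x HUG), Derive_comp by assumption. ring.
Qed.

Lemma Rpower_mul_abs_le (h : R -> R) (p B v : R) :
  0 < v -> Rabs (h v) <= B * v -> Rabs (Rpower v p * h v) <= B * Rpower v (p + 1).
Proof.
  intros Hv Hh.
  rewrite Rpower_plus, Rpower_1, Rabs_mult, (Rabs_right (Rpower v p)) by (auto; left; apply Rpower_gt_0).
  generalize (Rpower_gt_0 v p). nra.
Qed.

Lemma Derive_Rpower_mul_abs_le (h : R -> R) (p B v : R) :
  0 <= p -> 0 < v -> ex_derive h v -> Rabs (h v) <= B * v -> Rabs (Derive h v) <= B ->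
  Rabs (Derive (fun w => Rpower w p * h w) v) <= (p + 1) * B * Rpower v p.
Proof.
  intros Hp Hv Hh Hhv Hdh.
  assert (Hpow : is_derive (fun w => Rpower w p) v (p * Rpower v (p - 1)))
    by now apply is_derive_Reals, derivable_pt_lim_power.
  rewrite Derive_mult by (auto; eexists; exact Hpow).
  replace (Derive (fun w => Rpower w p) v) with (p * Rpower v (p - 1)) by (symmetry; now apply is_derive_unique).
  assert (Hv1 : Rpower v (p - 1) * v = Rpower v p).
  { rewrite <- (Rpower_1 v) at 2 by exact Hv. rewrite <- Rpower_plus. f_equal. ring. }
  generalize (Rpower_gt_0 v p) (Rpower_gt_0 v (p - 1)); intros.
  eapply Rle_trans; [apply Rabs_triang|].
  rewrite !Rabs_mult, (Rabs_right p), (Rabs_right (Rpower v (p - 1))), (Rabs_right (Rpower v p)) by lra.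
  assert (p * Rpower v (p - 1) * Rabs (h v) <= p * Rpower v (p - 1) * (B * v))
    by (apply Rmult_le_compat_l; nra).
  assert (Rpower v p * Rabs (Derive h v) <= Rpower v p * B) by (apply Rmult_le_compat_l; lra).
  nra.
Qed.

Lemma autonomous_power_bounds (U h : R -> R) (p B x : R) :
  0 <= p -> 0 < U x -> ex_derive U x -> ex_derive h (U x) ->
  (forall y, Derive U y = Rpower (U y) p * h (U y)) ->
  Rabs (h (U x)) <= B * U x -> Rabs (Derive h (U x)) <= B ->
  Rabs (Derive U x) <= B * Rpower (U x) (p + 1) /\
  Rabs (Derive_n U 2 x) <= (p + 1) * B ^ 2 * Rpower (U x) (p + (p + 1)).
Proof.
  intros Hp HUx HU1 Hh HUG Hhu Hdhu.
  set (G := fun w => Rpower w p * h w).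
  assert (HU' : Rabs (Derive U x) <= B * Rpower (U x) (p + 1))
    by (rewrite HUG; now apply Rpower_mul_abs_le).
  split; [exact HU' |].
  rewrite (Derive_n2_autonomous U G x HUG HU1).
  2: { apply ex_derive_mult; [eexists; now apply is_derive_Reals, derivable_pt_lim_power | exact Hh]. }
  rewrite Rabs_mult, Rpower_plus.
  apply (Rle_trans _ ((p + 1) * B * Rpower (U x) p * (B * Rpower (U x) (p + 1)))); [| right; ring].
  apply Rmult_le_compat; auto using Rabs_pos.
  now apply Derive_Rpower_mul_abs_le.
Qed.

Theorem lemma5p1 (m mu : R) (f : R -> R) (u_minus s : R) (U : R -> R)
  (hm0 : 0 < m) (hm1 : m < 1) (hmu : 0 < mu)
  (hf : smooth f)
  (hum : 0 < u_minus)
  (hs : s = (f 0 - f u_minus) / (0 - u_minus))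
  (hLax1 : Derive f 0 < s) (hLax2 : s < Derive f u_minus)
  (hU1 : forall x, ex_derive U x)
  (hU2 : forall x, ex_derive (Derive U) x)
  (hdec : forall x y, x < y -> U y < U x)
  (hode : forall x,
      - s * Derive U x + Derive (fun y => f (U y)) x
      = mu * Derive_n (fun y => Rpower (U y) m) 2 x)
  (hlimm : is_lim U m_infty u_minus)
  (hlimp : is_lim U p_infty 0) :
  exists C : R, 0 < C /\
    forall xi : R,
      Rabs (Derive U xi) <= C * Rpower (U xi) (2 - m) /\
      Rabs (Derive_n U 2 xi) <= C * Rpower (U xi) (3 - 2 * m).
Proof.
  assert (HU := decreasing_gt_lim_p_infty U 0 hdec hlimp).
  assert (HUm := decreasing_lt_lim_m_infty U u_minus hdec hlimm).
  assert (Hmum : mu * m <> 0) by (apply Rgt_not_eq, Rmult_lt_0_compat; assumption).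
  destruct (chord_gap_bounds f s (mu * m) u_minus hf Hmum) as [B [HB Hgap]].
  assert (HUG : forall x, Derive U x = Rpower (U x) (1 - m) * chord_gap f s (mu * m) (U x))
    by exact (profile_autonomous_ode m mu s f U hm0 hmu (fun x => hf 1%nat x) HU hU1 hU2 hdec hlimp hode).
  exists (B + 2 * B ^ 2). split; [nra |].
  intros xi.
  destruct (Hgap (U xi)) as [Hgu Hdgu]; [split; [apply HU | left; apply HUm] |].
  destruct (autonomous_power_bounds U (chord_gap f s (mu * m)) (1 - m) B xi) as [HU' HU''];
    [lra | apply HU | apply hU1 | now apply ex_derive_chord_gap | exact HUG | exact Hgu | exact Hdgu |].
  replace (1 - m + 1) with (2 - m) in HU', HU'' by ring.
  replace (1 - m + (2 - m)) with (3 - 2 * m) in HU'' by ring.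
  split; [apply (Rle_trans _ _ _ HU') | apply (Rle_trans _ _ _ HU'')];
    apply Rmult_le_compat_r; solve [left; apply Rpower_gt_0 | nra].
Qed.
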